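(* Let $n\geqslant 3$ and $N=2^n-1$. Let $\mathcal{A}_0$ be the set of $(\mathbf{x}';(z_h)_{1\leqslant h\leqslant N})$ with $x'_i\in\mathbb{Z}$, $z_h\in\mathbb{N}$ (positive integers) if $s(h)>1$ and $z_h\in\mathbb{Z}\smallsetminus\{0\}$ if $s(h)=1$, satisfying $$\sum_{i=1}^n x'_i\prod_{\substack{1\leqslant h\leqslant N,\ h\neq N\\ s(h)\geqslant 2}}z_h^{1-\varepsilon_i(h)}=0,$$ the coprimality condition $\gcd(z_N,x'_1z_1,x'_2z_2,\dots,x'_nz_{2^{n-1}})=1$, and such that $(z_h)$ is reduced. Then the map $$(\mathbf{x}';(z_h))\longmapsto\Big(z_1x'_1,\dots,z_{2^{n-1}}x'_n,\ \prod_h z_h^{\varepsilon_1(h)},\dots,\prod_h z_h^{\varepsilon_n(h)}\Big)$$ is a bijection from $\mathcal{A}_0$ onto the set of $(x_1,\dots,x_n,y_1,\dots,y_n)\in\mathbb{Z}^{2n}$ with $y_1\cdots y_n\neq 0$, $\sum_{i=1}^nx_i\prod_{j\neq i}y_j=0$ and $\gcd(x_1,\dots,x_n,y_1,\dots,y_n)=1$. Moreover, for elements $(\mathbf{x}';(z_h))$ satisfying the other conditions defining $\mathcal{A}_0$, the condition $\gcd(z_N,x'_1z_1,\dots,x'_nz_{2^{n-1}})=1$ is equivalent to $\gcd(x_1,\dots,x_n,y_1,\dots,y_n)=1$ for the image.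
   Context: For $h\in\{1,\dots,N\}$ write $h=\sum_j\varepsilon_j(h)2^{j-1}$ with $\varepsilon_j(h)\in\{0,1\}$ and $s(h)=\sum_j\varepsilon_j(h)$; $h\preceq\ell$ means $\varepsilon_j(h)\leqslant\varepsilon_j(\ell)$ for all $j$. The tuple $(z_h)$ is reduced if $\gcd(z_h,z_\ell)=1$ whenever $h,\ell$ are $\preceq$-incomparable. $z_{2^{j-1}}$ denotes the entry with index $h=2^{j-1}$. *)

From mathcomp Require Import all_boot all_order all_algebra.
Set Implicit Arguments. Unset Strict Implicit. Unset Printing Implicit Defensive.
Import GRing.Theory Num.Theory.

Definition Nn (n : nat) : nat := (2 ^ n).-1.

(* eps j h = epsilon_{j+1}(h) : the bit of weight 2^j of h (j is 0-based) *)
Definition eps (j h : nat) : nat := (h %/ 2 ^ j) %% 2.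

Definition bitsum (n h : nat) : nat := \sum_(j < n) eps j h.

Definition prec (n h l : nat) : bool := [forall j : 'I_n, eps j h <= eps j l].

Local Open Scope ring_scope.

(* z_h, for a tuple z = (z_1,...,z_N) stored as z : {ffun 'I_N -> int},
   entry k : 'I_N being z_(k+1); value 0 outside 1..N (never used) *)
Definition zh (N : nat) (z : {ffun 'I_N -> int}) (h : nat) : int :=
  match (insub h.-1 : option 'I_N) with Some k => z k | None => 0 end.

Definition gcdzs (s : seq int) : int := foldr gcdz 0 s.

Definition A0_eq (n : nat) (x' : {ffun 'I_n -> int}) (z : {ffun 'I_(Nn n) -> int}) : Prop :=
  \sum_(i < n) x' i *
     \prod_(1 <= h < (Nn n).+1 | (h != Nn n) && (2 <= bitsum n h)%N)
        zh z h ^+ (1 - eps i h) = 0.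

Definition A0_gcd (n : nat) (x' : {ffun 'I_n -> int}) (z : {ffun 'I_(Nn n) -> int}) : Prop :=
  gcdzs (zh z (Nn n) :: [seq x' i * zh z (2 ^ i) | i <- enum 'I_n]) = 1.

Definition A0_sign (n : nat) (z : {ffun 'I_(Nn n) -> int}) : Prop :=
  forall h : nat, (1 <= h <= Nn n)%N ->
    if (1 < bitsum n h)%N then 0 < zh z h else zh z h != 0.

Definition reduced (n : nat) (z : {ffun 'I_(Nn n) -> int}) : Prop :=
  forall h l : nat, (1 <= h <= Nn n)%N -> (1 <= l <= Nn n)%N ->
    ~~ prec n h l -> ~~ prec n l h -> gcdz (zh z h) (zh z l) = 1.

Definition A0 (n : nat) (a : {ffun 'I_n -> int} * {ffun 'I_(Nn n) -> int}) : Prop :=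
  [/\ A0_eq a.1 a.2, A0_gcd a.1 a.2, A0_sign a.2 & reduced a.2].

Definition phi (n : nat) (a : {ffun 'I_n -> int} * {ffun 'I_(Nn n) -> int})
  : {ffun 'I_n -> int} * {ffun 'I_n -> int} :=
  ([ffun i : 'I_n => zh a.2 (2 ^ i) * a.1 i],
   [ffun j : 'I_n => \prod_(1 <= h < (Nn n).+1) zh a.2 h ^+ eps j h]).

Definition B_gcd (n : nat) (b : {ffun 'I_n -> int} * {ffun 'I_n -> int}) : Prop :=
  gcdzs ([seq b.1 i | i <- enum 'I_n] ++ [seq b.2 i | i <- enum 'I_n]) = 1.

Definition Bset (n : nat) (b : {ffun 'I_n -> int} * {ffun 'I_n -> int}) : Prop :=
  [/\ \prod_(i < n) b.2 i != 0,
      \sum_(i < n) b.1 i * \prod_(j < n | j != i) b.2 j = 0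
    & B_gcd b].

(* Fix a prime p and put w(h) = v_p(z_h).  Reducedness says that the h with
   p | z_h are pairwise comparable bitwise, so w is a multiset carried by a
   chain of nonempty subsets of {1..n}, and v_p(y_j) counts the members of the
   chain containing j.  Such a chain is recovered from these counts by peeling
   off its top element, whose bits are exactly the j with a positive count;
   with the signs fixed by z_h > 0 for s(h) > 1 this gives injectivity.
   Conversely, any counts a_j are realised by the staircase chain
   {j : t < a_j}, t = 0, 1, ..., which builds z for surjectivity; in it the
   singleton {i} occurs, if at all, at most a_i - a_m times for every m <> i,
   and comparing valuations in sum_i x_i prod_(j <> i) y_j = 0 then shows that
   z_(2^(i-1)) divides x_i.  The top of the chain is N exactly when p divides
   every y_j, which makes the two gcd conditions equivalent, and the linear
   equation for x is the one for x' multiplied by a common factor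
   prod_h z_h^(e(h)). *)

From mathcomp Require Import all_boot all_order all_algebra zify.
Import GRing.Theory Num.Theory.
Set Implicit Arguments. Unset Strict Implicit. Unset Printing Implicit Defensive.

Lemma eps_le1 j h : eps j h <= 1.
Proof. by rewrite /eps -ltnS ltn_pmod. Qed.

Lemma eps0 h : eps 0 h = h %% 2.
Proof. by rewrite /eps expn0 divn1. Qed.

Lemma epsS j h : eps j.+1 h = eps j (h %/ 2).
Proof. by rewrite /eps expnS divnMA. Qed.

Lemma sum_bits_recl (f : nat -> bool) m :
  \sum_(j < m.+1) f j * 2 ^ j = f 0 + (\sum_(j < m) f j.+1 * 2 ^ j) * 2.
Proof.
rewrite big_ord_recl expn0 muln1 big_distrl; congr (_ + _).
by apply: eq_bigr => j _; rewrite expnS mulnCA mulnC.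
Qed.

Lemma eps_sum_bits (f : nat -> bool) m k :
  eps k (\sum_(j < m) f j * 2 ^ j) = (k < m) && f k.
Proof.
elim: m f k => [|m IH] f k; first by rewrite big_ord0 /eps div0n mod0n.
rewrite sum_bits_recl; case: k => [|k]; rewrite ?eps0 ?epsS addnC.
  by rewrite modnMDl; case: (f 0).
rewrite divnMDl // divn_small ?addn0; first exact: (IH (fun j => f j.+1)).
by case: (f 0).
Qed.

Lemma sum_bits_lt (f : nat -> bool) m : \sum_(j < m) f j * 2 ^ j < 2 ^ m.
Proof.
elim: m f => [|m IH] f; first by rewrite big_ord0.
by rewrite sum_bits_recl expnS; have := IH (fun j => f j.+1); case: (f 0) => /=; lia.
Qed.

Lemma sum_bitsE m h : h < 2 ^ m -> h = \sum_(j < m) (eps j h == 1) * 2 ^ j.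
Proof.
elim: m h => [|m IH] h; first by rewrite expn0 big_ord0; case: h.
rewrite (sum_bits_recl (fun j => eps j h == 1)) expnS => hlt.
under eq_bigr => j _ do rewrite epsS.
rewrite -IH ?eps0; last lia.
by have := divn_eq h 2; have := ltn_pmod h (isT : 0 < 2); case: (h %% 2) => [|[|]] //=; lia.
Qed.

Definition code n (b : 'I_n -> bool) : nat := \sum_(j < n) b j * 2 ^ j.

Lemma codeE n (b : 'I_n -> bool) :
  code b = \sum_(j < n) oapp b false (insub (j : nat)) * 2 ^ j.
Proof. by apply: eq_bigr => j _; rewrite valK. Qed.

Lemma eps_code n (b : 'I_n -> bool) (k : 'I_n) : eps k (code b) = b k.
Proof. by rewrite codeE (eps_sum_bits (fun j => oapp b false (insub j))) ltn_ord valK. Qed.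

Lemma leq_Nn n h : (h <= Nn n) = (h < 2 ^ n).
Proof. have : 0 < 2 ^ n by rewrite expn_gt0.
by rewrite /Nn; lia.
Qed.

Lemma code_leNn n (b : 'I_n -> bool) : code b <= Nn n.
Proof. by rewrite leq_Nn codeE (sum_bits_lt (fun j => oapp b false (insub j))). Qed.

Lemma code_gt0 n (b : 'I_n -> bool) k : b k -> 0 < code b.
Proof.
by move=> bk; rewrite lt0n; apply/eqP => c0; have := eps_code b k; rewrite c0 bk /eps div0n.
Qed.

Lemma eq_bits n h l : h <= Nn n -> l <= Nn n ->
  (forall j : 'I_n, eps j h = eps j l) -> h = l.
Proof.
rewrite !leq_Nn => /sum_bitsE hE /sum_bitsE lE E.
by rewrite hE lE; apply: eq_bigr => j _; rewrite E.
Qed.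

Lemma codeT n : code (fun _ : 'I_n => true) = Nn n.
Proof.
rewrite /code /Nn; elim: n => [|n IH]; first by rewrite big_ord0.
have : 0 < 2 ^ n by rewrite expn_gt0.
by rewrite big_ord_recr /= IH expnS; lia.
Qed.

Lemma eps_Nn n (j : 'I_n) : eps j (Nn n) = 1.
Proof. by rewrite -codeT eps_code. Qed.

Lemma code_delta n (i : 'I_n) : code (fun k : 'I_n => k == i) = 2 ^ i.
Proof.
rewrite /code (bigD1 i) //= eqxx mul1n big1 ?addn0 // => k /negbTE ->.
by rewrite mul0n.
Qed.

Lemma eps_exp2 n (i k : 'I_n) : eps k (2 ^ i) = (k == i).
Proof. by rewrite -code_delta eps_code. Qed.

Lemma exp2_range n (i : 'I_n) : 1 <= 2 ^ i <= Nn n.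
Proof. by rewrite expn_gt0 /= -code_delta code_leNn. Qed.

Lemma Nn_range n : 0 < n -> 1 <= Nn n <= Nn n.
Proof. by move=> n0; rewrite leqnn andbT -(codeT n) (@code_gt0 _ _ (Ordinal n0)). Qed.

Lemma exists_bit n h : 1 <= h <= Nn n -> exists j : 'I_n, eps j h = 1.
Proof.
case/andP=> h1 /[dup] hN; rewrite leq_Nn => /sum_bitsE hE.
have [j /eqP ej | no_bit] := pickP (fun j : 'I_n => eps j h == 1); first by exists j.
by move: h1; rewrite hE big1 // => j _; rewrite no_bit.
Qed.

Lemma bitsum_gt0 n h : 1 <= h <= Nn n -> 0 < bitsum n h.
Proof. by move=> /exists_bit [j ej]; rewrite /bitsum (bigD1 j) //= ej. Qed.

Lemma bitsum_exp2 n (i : 'I_n) : bitsum n (2 ^ i) = 1.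
Proof.
rewrite /bitsum (bigD1 i) //= eps_exp2 eqxx big1 // => k /negbTE ki.
by rewrite eps_exp2 ki.
Qed.

Lemma bitsum_le1_exp2 n h (i : 'I_n) : 1 <= h <= Nn n -> bitsum n h <= 1 ->
  eps i h = 1 -> h = 2 ^ i.
Proof.
move=> /andP[_ hN] hsum ei; apply: eq_bits (hN) _ _ => [|k].
  by case/andP: (exp2_range i).
rewrite eps_exp2; case: eqP => [-> //|/eqP ki].
by move: hsum; rewrite /bitsum (bigD1 i) //= ei (bigD1 k) //=; lia.
Qed.

Lemma prec_bitsum n h l : prec n h l -> bitsum n l <= bitsum n h -> prec n l h.
Proof.
move=> /forallP hl hsum; apply/forallP => j.
have : \sum_(k < n) (eps k l - eps k h) == 0.
  have : bitsum n l = bitsum n h + \sum_(k < n) (eps k l - eps k h).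
    by rewrite /bitsum -big_split; apply: eq_bigr => k _ /=; have := hl k; lia.
  lia.
by rewrite sum_nat_eq0 => /forallP /(_ j) /=; lia.
Qed.

Section RangeSums.
Variables (N : nat) (F : nat -> nat).

Lemma leq_sum_range M : 1 <= M <= N -> F M <= \sum_(1 <= h < N.+1) F h.
Proof.
by move=> MN; rewrite (bigD1_seq M) ?iota_uniq ?mem_index_iota ?ltnS //= leq_addr.
Qed.

Lemma sum_range_gt0 : 0 < \sum_(1 <= h < N.+1) F h -> exists2 h, 1 <= h <= N & 0 < F h.
Proof.
rewrite lt0n sum_nat_seq_neq0 => /hasP [h]; rewrite mem_index_iota ltnS => hN Fh.
by exists h; rewrite // lt0n.
Qed.

Lemma sum_range_eq0 : \sum_(1 <= h < N.+1) F h = 0 -> forall h, 1 <= h <= N -> F h = 0.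
Proof. by move=> F0 h hN; apply/eqP; rewrite -leqn0 -F0 leq_sum_range. Qed.

Lemma sum_range_delta M : 1 <= M <= N -> \sum_(1 <= h < N.+1) F h * (h == M) = F M.
Proof.
move=> MN; rewrite (bigD1_seq M) ?iota_uniq ?mem_index_iota ?ltnS //= eqxx muln1.
by rewrite big1_seq ?addn0 // => h /andP[/negbTE -> _]; rewrite muln0.
Qed.

End RangeSums.

Section WeightChains.
Variable n : nat.
Local Notation N := (Nn n).

Definition bitweight (w : nat -> nat) (j : nat) : nat :=
  \sum_(1 <= h < N.+1) eps j h * w h.

Definition chain (w : nat -> nat) : Prop :=
  forall h l, 1 <= h <= N -> 1 <= l <= N -> 0 < w h -> 0 < w l ->
    prec n h l || prec n l h.

Lemma eq_bitweight v w : v =1 w -> bitweight v =1 bitweight w.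
Proof. by move=> vw j; apply: eq_bigr => h _; rewrite vw. Qed.

Lemma bitweight_gt0 w j : 0 < bitweight w j -> exists2 h, 1 <= h <= N & 0 < w h.
Proof.
by case/sum_range_gt0 => h hN; rewrite muln_gt0 => /andP[_ wh]; exists h.
Qed.

Lemma bitweight_eq0 w j : (forall h, 1 <= h <= N -> w h = 0) -> bitweight w j = 0.
Proof.
move=> w0; rewrite /bitweight big_nat_cond big1 // => h /andP[hN _].
by rewrite w0 ?muln0 // -ltnS.
Qed.

Lemma eq0_bitweight w : (forall j : 'I_n, bitweight w j = 0) ->
  forall h, 1 <= h <= N -> w h = 0.
Proof.
move=> w0 h hN; have [j ej] := exists_bit hN.
by have := leq_sum_range (fun h => eps j h * w h) hN; rewrite -/(bitweight w j) w0 ej; lia.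
Qed.

Lemma bitweight_add_delta w M j : 1 <= M <= N ->
  bitweight (fun h => w h + (h == M)) j = bitweight w j + eps j M.
Proof.
move=> MN; rewrite /bitweight -(sum_range_delta (eps j) MN).
by rewrite -big_split; apply: eq_bigr => h _; rewrite mulnDr.
Qed.

Lemma chain_le v w : chain w -> (forall h, v h <= w h) -> chain v.
Proof.
move=> Cw vw h l hN lN vh vl.
by apply: Cw => //; apply: leq_trans (vw _); [exact: vh | exact: vl].
Qed.

Definition is_top (w : nat -> nat) (M : nat) : Prop :=
  [/\ 1 <= M <= N, 0 < w M & forall h, 1 <= h <= N -> 0 < w h -> prec n h M].

Lemma exists_top w : chain w -> (exists2 h, 1 <= h <= N & 0 < w h) -> exists M, is_top w M.
Proof.
move=> Cw [h /andP[h1 hN] wh]; have hlt : h < N.+1 by rewrite ltnS.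
pose supp (i : 'I_N.+1) := (1 <= i) && (0 < w i).
have supp_h : supp (Ordinal hlt) by rewrite /supp h1 wh.
have [M /andP[M1 wM] Mmax] := arg_maxnP (fun i : 'I_N.+1 => bitsum n i) supp_h.
have MN : 1 <= M <= N by rewrite M1 -ltnS ltn_ord.
exists M; split=> // l lN wl; have [l1 lN'] := andP lN.
have /orP [//|Ml] := Cw l M lN MN wl wM.
apply: prec_bitsum Ml _; rewrite -ltnS in lN'.
by apply: (Mmax (Ordinal lN')); rewrite /supp /= l1 wl.
Qed.

Lemma bitweight_top w M (j : 'I_n) : is_top w M -> (0 < bitweight w j) = (eps j M == 1).
Proof.
case=> MN wM Mtop; apply/idP/idP => [/sum_range_gt0 [h hN]|/eqP ejM].
  rewrite muln_gt0 => /andP[ejh wh].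
  by have /forallP/(_ j) := Mtop h hN wh; have := eps_le1 j M; lia.
by apply: leq_trans (leq_sum_range (fun h => eps j h * w h) MN); rewrite ejM muln_gt0.
Qed.

Lemma top_unique w1 w2 M1 M2 : (forall j : 'I_n, bitweight w1 j = bitweight w2 j) ->
  is_top w1 M1 -> is_top w2 M2 -> M1 = M2.
Proof.
move=> E top1 top2; have [/andP[_ M1N] _ _] := top1; have [/andP[_ M2N] _ _] := top2.
apply: (@eq_bits n) M1N M2N _ => j; apply/eqP.
have := eps_le1 j M1; have := eps_le1 j M2; have := bitweight_top j top1.
by rewrite E (bitweight_top j top2); case: (eps j M1) => [|[|]]; case: (eps j M2) => [|[|]].
Qed.

Lemma chain_bitweight_inj w1 w2 : chain w1 -> chain w2 ->
    (forall j : 'I_n, bitweight w1 j = bitweight w2 j) ->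
  forall h, 1 <= h <= N -> w1 h = w2 h.
Proof.
have [m] := ubnP (\sum_(1 <= h < N.+1) w1 h).
elim: m => // m IH in w1 w2 *; rewrite ltnS => mass C1 C2 E.
have [/sum_range_eq0 w1_0|/sum_range_gt0 supp1] := posnP (\sum_(1 <= h < N.+1) w1 h).
  have w2_0 := eq0_bitweight (fun j => etrans (esym (E j)) (bitweight_eq0 j w1_0)).
  by move=> h hN; rewrite w1_0 ?w2_0.
have [M top1] := exists_top C1 supp1; have [MN wM1 _] := top1.
have [j0 ej0] := exists_bit MN.
have /bitweight_gt0 supp2 : 0 < bitweight w2 j0 by rewrite -E (bitweight_top j0 top1) ej0.
have [M2 top2] := exists_top C2 supp2; have [_ wM2 _] := top2.
have eM := top_unique E top1 top2; subst M2.
pose v1 h := w1 h - (h == M); pose v2 h := w2 h - (h == M).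
have w1E h : w1 h = v1 h + (h == M) by rewrite /v1; case: eqP => [->|]; lia.
have w2E h : w2 h = v2 h + (h == M) by rewrite /v2; case: eqP => [->|]; lia.
suff v12 : forall h, 1 <= h <= N -> v1 h = v2 h by move=> h hN; rewrite w1E w2E v12.
apply: IH.
- move: mass; rewrite (eq_bigr _ (fun h _ => w1E h)) big_split /=.
  rewrite [X in _ + X](eq_bigr (fun h => 1 * (h == M))); last by move=> h _; rewrite mul1n.
  by rewrite sum_range_delta // addn1.
- by apply: chain_le C1 _ => h; rewrite leq_subr.
- by apply: chain_le C2 _ => h; rewrite leq_subr.
- move=> j; have := E j.
  rewrite (eq_bitweight w1E) (eq_bitweight w2E) !bitweight_add_delta //; lia.
Qed.

Definition staircase (a : 'I_n -> nat) (K h : nat) : nat :=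
  \sum_(t < K) (h == code (fun j : 'I_n => t < a j)).

Lemma staircase_gt0 a K h : 0 < staircase a K h ->
  exists t : 'I_K, h = code (fun j : 'I_n => t < a j).
Proof.
rewrite lt0n sum_nat_eq0 negb_forall => /existsP [t].
by rewrite /= eqb0 negbK => /eqP ->; exists t.
Qed.

Lemma staircase_chain a K : chain (staircase a K).
Proof.
move=> h l _ _ /staircase_gt0 [t ->] /staircase_gt0 [s ->].
by case: (leqP t s) => ts; apply/orP; [right|left]; apply/forallP => j;
  rewrite !eps_code; case: ltnP; case: ltnP => //; lia.
Qed.

Lemma sum_ord_ltn K a : a <= K -> \sum_(t < K) (t < a) = a.
Proof.
move=> aK; rewrite -(big_mkord xpredT (fun t => nat_of_bool (t < a))).
rewrite (big_cat_nat (leq0n a) aK) /= [X in _ + X]big1_seq ?addn0; last first.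
  by move=> t /andP[_]; rewrite mem_index_iota => /andP[le_at _]; rewrite ltnNge le_at.
rewrite big_nat_cond (eq_bigr (fun _ => 1)); last by move=> t /andP[/andP[_ ->]].
by rewrite -big_nat_cond sum_nat_const_nat subn0 muln1.
Qed.

Lemma bitweight_staircase a K (j : 'I_n) : a j <= K -> bitweight (staircase a K) j = a j.
Proof.
move=> ajK; rewrite /bitweight /staircase -[RHS](sum_ord_ltn ajK).
under eq_bigr => h _ do rewrite big_distrr /=.
rewrite exchange_big /=; apply: eq_bigr => t _.
set c := code _; have [c0|c_gt0] := posnP c.
  have := eps_code (fun j : 'I_n => t < a j) j; rewrite -/c c0 /eps div0n mod0n => <-.
  rewrite big1_seq // => h /andP[_]; rewrite mem_index_iota => /andP[h1 _].
  by rewrite eqn0Ngt h1 muln0.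
by rewrite sum_range_delta ?c_gt0 ?code_leNn // eps_code.
Qed.

Lemma staircase_exp2 a K (i m : 'I_n) : (forall j, a j <= K) -> m != i ->
  0 < staircase a K (2 ^ i) -> staircase a K (2 ^ i) + a m <= a i.
Proof.
move=> aK mi; have bits t : 2 ^ i = code (fun j : 'I_n => t < a j) -> a m <= t < a i.
  move=> ti; have := eps_code (fun j : 'I_n => t < a j) i.
  have := eps_code (fun j : 'I_n => t < a j) m.
  by rewrite -ti !eps_exp2 eqxx (negbTE mi); case: (ltnP t (a m)); case: (ltnP t (a i)).
move=> /staircase_gt0 [t0 /bits /andP[mt0 t0i]].
rewrite -[a m](sum_ord_ltn (aK m)) -[a i](sum_ord_ltn (aK i)) -big_split.
apply: leq_sum => t _ /=; case: eqP => [/bits /andP[mt ti]|_].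
  by rewrite ti ltnNge mt.
by case: ltnP => // tm; have -> : t < a i by lia.
Qed.

End WeightChains.

Lemma logn_prod (I : Type) p (r : seq I) (P : pred I) (F : I -> nat) :
  (forall i, P i -> 0 < F i) ->
  logn p (\prod_(i <- r | P i) F i) = \sum_(i <- r | P i) logn p (F i).
Proof.
move=> F_gt0; elim: r => [|i r IH]; first by rewrite !big_nil logn1.
rewrite !big_cons; case: ifP => // Pi.
by rewrite lognM ?IH ?F_gt0 //; apply: prodn_cond_gt0.
Qed.

Lemma absz_prod (I : Type) (r : seq I) (P : pred I) (F : I -> int) :
  `|(\prod_(i <- r | P i) F i)%R|%N = \prod_(i <- r | P i) `|F i|%N.
Proof. exact: (big_morph absz abszM absz1). Qed.

Lemma logn_eq0_prime p m : ~~ prime p -> logn p m = 0.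
Proof. by move=> np; rewrite lognE (negbTE np). Qed.

Lemma dvdn_from_logn m k : 0 < m -> 0 < k ->
  (forall p, prime p -> logn p m <= logn p k) -> m %| k.
Proof.
move=> m_gt0 k_gt0 le_mk; rewrite -(@eqn_from_log (gcdn m k) m) ?dvdn_gcdr ?gcdn_gt0 ?m_gt0 //.
move=> p; have [pp|np] := boolP (prime p); last by rewrite !logn_eq0_prime.
by rewrite logn_gcd //; have := le_mk p pp; lia.
Qed.

Lemma logn_gt0_dvd p m : prime p -> 0 < m -> (0 < logn p m) = (p %| m).
Proof. by move=> pp m_gt0; rewrite logn_gt0 mem_primes pp m_gt0. Qed.

Section Monomials.
Variable n : nat.
Local Notation N := (Nn n).
Implicit Types (z : {ffun 'I_N -> int}) (f : nat -> nat).

Definition zmono (g : nat -> int) f : int := (\prod_(1 <= h < N.+1) g h ^+ f h)%R.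

Definition nonzero z := forall h, 1 <= h <= N -> zh z h != 0%R.

Lemma sign_nonzero z : A0_sign z -> nonzero z.
Proof. by move=> S h /S; case: ifP => // _; rewrite lt0r => /andP[]. Qed.

Lemma zh_ord z (k : 'I_N) : zh z k.+1 = z k.
Proof. by rewrite /zh /= valK. Qed.

Lemma eq_zh z1 z2 : (forall h, 1 <= h <= N -> zh z1 h = zh z2 h) -> z1 = z2.
Proof. by move=> E; apply/ffunP => k; rewrite -!zh_ord E /=. Qed.

Lemma zh_ffun (F : nat -> int) h : 1 <= h <= N -> zh [ffun k : 'I_N => F k.+1] h = F h.
Proof.
case/andP=> h_gt0 hN; have hlt : h.-1 < N by lia.
by rewrite /zh (insubT (fun i => i < N) hlt) /= ffunE prednK.
Qed.

Lemma zmono1 f : zmono (fun=> 1%R) f = 1%R.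
Proof. by rewrite /zmono big1 // => h _; rewrite expr1n. Qed.

Lemma zmonoD g f1 f2 : (zmono g f1 * zmono g f2)%R = zmono g (fun h => f1 h + f2 h).
Proof. by rewrite /zmono -big_split; apply: eq_bigr => h _; rewrite exprD. Qed.

Lemma zmonoMl g1 g2 f : zmono (fun h => g1 h * g2 h)%R f = (zmono g1 f * zmono g2 f)%R.
Proof. by rewrite /zmono -big_split; apply: eq_bigr => h _; rewrite exprMn. Qed.

Lemma eq_zmono g1 g2 f1 f2 :
    (forall h, 1 <= h <= N -> f1 h = f2 h /\ (0 < f1 h -> g1 h = g2 h)) ->
  zmono g1 f1 = zmono g2 f2.
Proof.
move=> E; rewrite /zmono big_nat_cond [RHS]big_nat_cond.
apply: eq_bigr => h /andP[hN _]; have [<- g12] := E h hN.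
by case: (posnP (f1 h)) => [->|/g12 ->]; rewrite ?expr0.
Qed.

Lemma zmono_neq0 g f : (forall h, 1 <= h <= N -> g h != 0%R) -> zmono g f != 0%R.
Proof.
move=> g_neq0; rewrite /zmono prodf_seq_neq0; apply/allP => h.
by rewrite mem_index_iota => hN; rewrite expf_neq0 ?g_neq0.
Qed.

Lemma zmono_delta g M : 1 <= M <= N -> zmono g (fun h => h == M) = g M.
Proof.
move=> MN; rewrite /zmono (bigD1_seq M) ?iota_uniq ?mem_index_iota ?ltnS //= eqxx expr1.
by rewrite big1_seq ?mulr1 // => h /andP[/negbTE -> _]; rewrite expr0.
Qed.

Lemma logn_zmono g f p : (forall h, 1 <= h <= N -> g h != 0%R) ->
  logn p `|zmono g f| = \sum_(1 <= h < N.+1) f h * logn p `|g h|.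
Proof.
move=> g_neq0; rewrite absz_prod big_nat_cond logn_prod -?big_nat_cond.
  by apply: eq_bigr => h _; rewrite abszX lognX.
by move=> h /andP[hN _]; rewrite abszX expn_gt0 absz_gt0 g_neq0.
Qed.

Lemma zmono_bits_split g (j : 'I_n) :
  zmono g (eps j) = (g (2 ^ j)%N * zmono g (fun h => (eps j h * (h != 2 ^ j))%N))%R.
Proof.
rewrite -(zmono_delta g (exp2_range j)) zmonoD; apply: eq_zmono => h hN.
by split=> //; case: eqP => [->|_]; rewrite ?eps_exp2 ?eqxx ?muln1.
Qed.

Lemma eps_bitsum_gt1 h (j : 'I_n) :
  1 <= h <= N -> h != 2 ^ j -> eps j h = 1 -> 1 < bitsum n h.
Proof.
by move=> hN hj ej; rewrite ltnNge; apply: contra hj => hsum; rewrite (bitsum_le1_exp2 hN hsum ej).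
Qed.

End Monomials.

Section Valuations.
Variable n : nat.
Local Notation N := (Nn n).
Implicit Types (z : {ffun 'I_N -> int}).

Lemma chain_logn z p : reduced z -> nonzero z -> prime p ->
  chain n (fun h => logn p `|zh z h|).
Proof.
move=> zred z_neq0 pp h l hN lN; rewrite !logn_gt0_dvd ?absz_gt0 ?z_neq0 // => ph pl.
apply/negPn/negP; rewrite negb_or => /andP[nhl nlh].
have /eqP := zred h l hN lN nhl nlh; rewrite /gcdz -[_ == _]/(_ == 1%N) => /eqP g1.
by have := dvdn_gcd p `|zh z h| `|zh z l|; rewrite ph pl g1 dvdn1 => /eqP p1; rewrite p1 in pp.
Qed.

Lemma logn_ycoord z p j : nonzero z ->
  logn p `|zmono n (zh z) (eps j)| = bitweight n (fun h => logn p `|zh z h|) j.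
Proof. exact: logn_zmono. Qed.

Lemma abs_zh_ycoord_inj z1 z2 h : nonzero z1 -> nonzero z2 -> reduced z1 -> reduced z2 ->
    (forall j : 'I_n, zmono n (zh z1) (eps j) = zmono n (zh z2) (eps j)) ->
  1 <= h <= N -> `|zh z1 h| = `|zh z2 h|.
Proof.
move=> z1_neq0 z2_neq0 z1red z2red E hN.
apply: eqn_from_log; rewrite ?absz_gt0 ?z1_neq0 ?z2_neq0 // => p.
have [pp|np] := boolP (prime p); last by rewrite !logn_eq0_prime.
apply: (chain_bitweight_inj (chain_logn z1red z1_neq0 pp) (chain_logn z2red z2_neq0 pp)) => // j.
by rewrite -!logn_ycoord // E.
Qed.

Lemma ycoord_inj z1 z2 : A0_sign z1 -> A0_sign z2 -> reduced z1 -> reduced z2 ->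
    (forall j : 'I_n, zmono n (zh z1) (eps j) = zmono n (zh z2) (eps j)) ->
  z1 = z2.
Proof.
move=> S1 S2 z1red z2red E; have z1_neq0 := sign_nonzero S1; have z2_neq0 := sign_nonzero S2.
have abs_eq := abs_zh_ycoord_inj z1_neq0 z2_neq0 z1red z2red E.
have big_eq h : 1 <= h <= N -> 1 < bitsum n h -> zh z1 h = zh z2 h.
  move=> hN hsum; have := S1 h hN; have := S2 h hN; rewrite hsum => pos2 pos1.
  by rewrite -(gtz0_abs pos1) -(gtz0_abs pos2) abs_eq.
apply: eq_zh => h hN; have [/(big_eq h hN) //|hsum] := ltnP 1 (bitsum n h).
have [j ej] := exists_bit hN; rewrite (bitsum_le1_exp2 hN hsum ej).
have rest_eq : zmono n (zh z1) (fun l => (eps j l * (l != 2 ^ j))%N) =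
                zmono n (zh z2) (fun l => (eps j l * (l != 2 ^ j))%N).
  apply: eq_zmono => l lN; split=> //; rewrite muln_gt0 lt0b => /andP[ejl lj].
  by apply: big_eq lN (eps_bitsum_gt1 lN lj _); have := eps_le1 j l; lia.
have := E j; rewrite !(zmono_bits_split _ j) rest_eq.
by apply: mulIf; apply: zmono_neq0.
Qed.

Lemma dvdn_ycoords z p : 0 < n -> prime p -> nonzero z -> reduced z ->
  [forall j : 'I_n, p %| `|zmono n (zh z) (eps j)|] = (p %| `|zh z N|).
Proof.
move=> n_gt0 pp z_neq0 zred; have NN := Nn_range n_gt0.
have y_gt0 j : 0 < `|zmono n (zh z) (eps j)| by rewrite absz_gt0 zmono_neq0.
have zN_gt0 : 0 < `|zh z N| by rewrite absz_gt0 z_neq0.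
apply/forallP/idP => [p_dvd|pN j]; last first.
  rewrite -logn_gt0_dvd // logn_ycoord //.
  apply: leq_trans (leq_sum_range (fun h => eps j h * logn p `|zh z h|) NN).
  by rewrite eps_Nn mul1n logn_gt0_dvd.
have C := chain_logn zred z_neq0 pp; pose j0 : 'I_n := Ordinal n_gt0.
have /bitweight_gt0 supp : 0 < bitweight n (fun h => logn p `|zh z h|) j0.
  by rewrite -logn_ycoord // logn_gt0_dvd.
have [M top] := exists_top C supp; have [/andP[_ MN] wM _] := top.
suff eMN : M = N by move: wM; rewrite eMN logn_gt0_dvd.
apply: (@eq_bits n) MN (leqnn N) _ => j.
rewrite eps_Nn; apply/eqP; rewrite -(bitweight_top j top).
by rewrite -logn_ycoord // logn_gt0_dvd.
Qed.

End Valuations.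

Lemma gcdzs_dvd (d : int) s : (d %| gcdzs s)%Z = all (dvdz d) s.
Proof. by elim: s => [|x s IH]; rewrite ?dvdz0 //= dvdz_gcd -/(gcdzs s) IH. Qed.

Lemma gcdzs_eq1P s :
  reflect (forall p, prime p -> ~~ all (fun x : int => p %| `|x|) s) (gcdzs s == 1%R).
Proof.
have -> : gcdzs s = Posz `|gcdzs s| by case: s.
have dvd_g p : (p %| `|gcdzs s|) = all (fun x : int => p %| `|x|) s.
  exact: (gcdzs_dvd (Posz p) s).
apply: (iffP eqP) => [[g1] p pp|no_p].
  by rewrite -dvd_g g1 dvdn1; apply: contraTneq pp => ->.
rewrite -[1%R]/(Posz 1); congr Posz.
case: (posnP `|gcdzs s|) => [g0|g_gt0]; first by have := no_p 2 isT; rewrite -dvd_g g0.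
apply/eqP; rewrite eqn_leq g_gt0 andbT leqNgt; apply/negP => /pdiv_prime pp.
by have := no_p _ pp; rewrite -dvd_g pdiv_dvd.
Qed.

Lemma all_map_enum (T : finType) (U : eqType) (f : T -> U) (P : pred U) :
  all P [seq f x | x <- enum T] = [forall x, P (f x)].
Proof.
apply/allP/forallP => [P_all x|P_all _ /mapP [x _ ->] //].
by apply: P_all; apply: map_f; rewrite mem_enum.
Qed.

Section PhiMap.
Variable n : nat.
Local Notation N := (Nn n).
Implicit Types (z : {ffun 'I_N -> int}).

Lemma phi1E (x' : {ffun 'I_n -> int}) z i : (phi (x', z)).1 i = (zh z (2 ^ i) * x' i)%R.
Proof. by rewrite ffunE. Qed.

Lemma phi2E (x' : {ffun 'I_n -> int}) z j : (phi (x', z)).2 j = zmono n (zh z) (eps j).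
Proof. by rewrite ffunE. Qed.

Lemma A0_gcd_phi (x' : {ffun 'I_n -> int}) z : 0 < n -> A0_sign z -> reduced z ->
  A0_gcd x' z <-> B_gcd (phi (x', z)).
Proof.
move=> n_gt0 /sign_nonzero z_neq0 zred.
pose dvd_all p := all (fun x : int => p %| `|x|).
have dvd_all_eq p : prime p ->
    dvd_all p (zh z N :: [seq (x' i * zh z (2 ^ i))%R | i <- enum 'I_n]) =
    dvd_all p ([seq (phi (x', z)).1 i | i <- enum 'I_n] ++
               [seq (phi (x', z)).2 i | i <- enum 'I_n]).
  move=> pp; rewrite /dvd_all -cat1s !all_cat all_seq1 !all_map_enum -dvdn_ycoords // andbC.
  by congr (_ && _); apply: eq_forallb => i; rewrite /= ffunE // mulrC.
rewrite /A0_gcd /B_gcd; split=> /eqP/gcdzs_eq1P no_p; apply/eqP/gcdzs_eq1P => p pp.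
  by rewrite -[all _ _]/(dvd_all p _) -dvd_all_eq //; exact: no_p.
by rewrite -[all _ _]/(dvd_all p _) dvd_all_eq //; exact: no_p.
Qed.

Definition common_exp (h : nat) : nat := if 2 <= bitsum n h then bitsum n h - 1 else 1.

Lemma common_exp_split (i : 'I_n) h : 1 <= h <= N ->
  (h == 2 ^ i) + \sum_(j < n | j != i) eps j h =
  common_exp h + (if (h != N) && (2 <= bitsum n h) then 1 - eps i h else 0).
Proof.
move=> hN; have hsum : bitsum n h = eps i h + \sum_(j < n | j != i) eps j h.
  by rewrite /bitsum (bigD1 i).
move: hsum; set S := \sum_(j < n | j != i) _ => hsum.
have ei1 := eps_le1 i h; have hsum_gt0 := bitsum_gt0 hN.
rewrite /common_exp; case: (leqP 2 (bitsum n h)) => [hsum2|hsum1].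
  have -> : (h == 2 ^ i) = false by apply: contraTF hsum2 => /eqP ->; rewrite bitsum_exp2.
  case: (eqVneq h N) => [hNn|_] /=; last lia.
  by move: hsum; rewrite hNn eps_Nn; lia.
rewrite andbF addn0; have [ei|ei] : eps i h = 1 \/ eps i h = 0 by lia.
  by rewrite -(bitsum_le1_exp2 hN _ ei) ?eqxx; lia.
have -> : (h == 2 ^ i) = false by apply: contra_eqF ei => /eqP ->; rewrite eps_exp2 eqxx.
lia.
Qed.

Lemma prod_ycoords z (i : 'I_n) :
  (\prod_(j < n | j != i) zmono n (zh z) (eps j))%R =
  zmono n (zh z) (fun h => \sum_(j < n | j != i) eps j h).
Proof. by rewrite /zmono exchange_big /=; apply: eq_bigr => h _; rewrite prodrXr. Qed.

Lemma phi_cofactor_sum (x' : {ffun 'I_n -> int}) z :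
  (\sum_(i < n) (phi (x', z)).1 i * \prod_(j < n | j != i) (phi (x', z)).2 j)%R =
  (zmono n (zh z) common_exp * \sum_(i < n) x' i *
     \prod_(1 <= h < N.+1 | (h != N) && (2 <= bitsum n h)%N) zh z h ^+ (1 - eps i h))%R.
Proof.
rewrite big_distrr; apply: eq_bigr => i _.
rewrite phi1E (eq_bigr _ (fun j _ => phi2E x' z j)) prod_ycoords big_mkcond /=.
rewrite (eq_bigr (fun h =>
    zh z h ^+ (if (h != N) && (2 <= bitsum n h) then 1 - eps i h else 0)%N)%R);
  last by move=> h _; case: ifP.
rewrite -(zmono_delta (zh z) (exp2_range i)) -[X in (_ * (_ * X))%R]/(zmono n (zh z) _).
rewrite mulrAC zmonoD mulrCA zmonoD mulrC; congr (_ * _)%R.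
by apply: eq_zmono => h hN; rewrite common_exp_split.
Qed.

End PhiMap.

Section CofactorSum.
Variables (n : nat) (x y : 'I_n -> int).
Hypothesis y_neq0 : forall k, y k != 0%R.

Let cofactor m := (\prod_(k < n | k != m) y k)%R.

Let logn_cofactor p m : logn p `|cofactor m| = \sum_(k < n | k != m) logn p `|y k|.
Proof. by rewrite absz_prod logn_prod // => k _; rewrite absz_gt0. Qed.

Let cofactor_neq0 m : cofactor m != 0%R.
Proof. by apply/prodf_neq0 => k _. Qed.

Lemma dvdz_cofactor_sum_eq0 (u : int) (i : 'I_n) :
    (\sum_(m < n) x m * cofactor m)%R = 0%R -> u != 0%R ->
    (forall p, prime p -> 0 < logn p `|u| -> forall m, m != i ->
       logn p `|u| + logn p `|y m| <= logn p `|y i|) ->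
  (u %| x i)%Z.
Proof.
move=> sum0 u_neq0 le_logn; have [->|xi_neq0] := eqVneq (x i) 0%R; first exact: dvdz0.
apply: dvdn_from_logn; rewrite ?absz_gt0 // => p pp.
have [->//|e_gt0] := posnP (logn p `|u|).
pose e := logn p `|u| + \sum_(k < n | k != i) logn p `|y k|.
have logn_split k :
    \sum_(l < n) logn p `|y l| = logn p `|y k| + \sum_(l < n | l != k) logn p `|y l|.
  exact: bigD1.
have dvd_term m : m != i -> (Posz (p ^ e) %| (x m * cofactor m)%R)%Z.
  move=> mi; have [->|xm_neq0] := eqVneq (x m) 0%R; first by rewrite mul0r dvdz0.
  rewrite dvdzE pfactor_dvdn ?absz_gt0 ?mulf_neq0 ?cofactor_neq0 // abszM lognM ?absz_gt0 //.
  have := logn_split i; have := logn_split m; have := le_logn p pp e_gt0 m mi.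
  by rewrite logn_cofactor /e; lia.
have : (Posz (p ^ e) %| (x i * cofactor i)%R)%Z.
  move/eqP: sum0; rewrite (bigD1 i) //= addr_eq0 => /eqP ->.
  by rewrite rpredN rpred_sum.
rewrite dvdzE pfactor_dvdn ?absz_gt0 ?mulf_neq0 ?cofactor_neq0 // abszM lognM ?absz_gt0 //.
by rewrite logn_cofactor /e; lia.
Qed.

End CofactorSum.

Section Construction.
Variables (n : nat) (y : {ffun 'I_n -> int}).
Hypothesis y_neq0 : forall j, y j != 0%R.
Local Notation N := (Nn n).

Definition ybound : nat := (\sum_(j < n) `|y j|).+1.

Definition zabs (h : nat) : nat :=
  \prod_(p < ybound | prime p) p ^ staircase (fun j => logn p `|y j|) ybound h.

Definition zsign (h : nat) : int :=
  if bitsum n h == 1 then (\prod_(k < n) sgz (y k) ^+ eps k h)%R else 1%R.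

Definition zconstr : {ffun 'I_N -> int} :=
  [ffun k : 'I_N => (zsign k.+1 * Posz (zabs k.+1))%R].

Lemma abs_y_lt_ybound j : `|y j| < ybound.
Proof. by rewrite ltnS (bigD1 j) //= leq_addr. Qed.

Lemma logn_y_le_ybound p j : logn p `|y j| <= ybound.
Proof.
by apply/ltnW/(leq_trans (ltn_logl p _) (ltnW (abs_y_lt_ybound j))); rewrite absz_gt0.
Qed.

Lemma zabs_gt0 h : 0 < zabs h.
Proof. by apply: prodn_cond_gt0 => p pp; rewrite expn_gt0 prime_gt0. Qed.

Lemma logn_zabs q h : prime q -> 0 < h ->
  logn q (zabs h) = staircase (fun j => logn q `|y j|) ybound h.
Proof.
move=> qp h_gt0; rewrite /zabs logn_prod => [|p pp]; last by rewrite expn_gt0 prime_gt0.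
under eq_bigr => p pp do rewrite lognX logn_prime //.
have [q_lt|q_ge] := ltnP q ybound.
  rewrite (bigD1 (Ordinal q_lt)) //= eqxx muln1 big1 ?addn0 // => p /andP[_ pq].
  by rewrite (_ : (q == p) = false) ?muln0 //; apply: contraNF pq => /eqP qp'; apply/eqP/val_inj.
rewrite big1 => [|p _]; last first.
  rewrite (_ : (q == p) = false) ?muln0 //.
  by apply: contraTF (ltn_ord p) => /eqP <-; rewrite -leqNgt.
rewrite /staircase big1 // => t _.
suff -> : code (fun j : 'I_n => t < logn q `|y j|) = 0 by rewrite eqn0Ngt h_gt0.
by rewrite /code big1 // => j _; rewrite ltn_log0 // (leq_trans (abs_y_lt_ybound j)).
Qed.

Lemma abs_zsign h : `|zsign h| = 1.
Proof.
rewrite /zsign; case: ifP => // _; rewrite absz_prod big1 // => k _.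
by rewrite abszX; have := y_neq0 k; case: sgzP => // _ _; rewrite exp1n.
Qed.

Lemma zh_zconstr h : 1 <= h <= N -> zh zconstr h = (zsign h * Posz (zabs h))%R.
Proof. exact: (zh_ffun (n := n) (fun k => zsign k * Posz (zabs k))%R). Qed.

Lemma abs_zconstr h : 1 <= h <= N -> `|zh zconstr h| = zabs h.
Proof. by move=> hN; rewrite zh_zconstr // abszM abs_zsign mul1n. Qed.

Lemma sign_zconstr : A0_sign zconstr.
Proof.
move=> h hN; rewrite zh_zconstr //; case: ifP => [hsum|_].
  by rewrite /zsign gtn_eqF // mul1r ltz_nat zabs_gt0.
by rewrite mulf_neq0 // -?absz_eq0 ?abs_zsign // -lt0n zabs_gt0.
Qed.

Lemma reduced_zconstr : reduced zconstr.
Proof.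
move=> h l hN lN nhl nlh; rewrite /gcdz !abs_zconstr //; congr Posz.
apply/eqP; rewrite eqn_leq gcdn_gt0 zabs_gt0 andbT leqNgt; apply/negP => /pdiv_prime pp.
set p := pdiv _ in pp; have p_dvd := pdiv_dvd (gcdn (zabs h) (zabs l)).
have [h_gt0 _] := andP hN; have [l_gt0 _] := andP lN.
have stair_gt0 k : 0 < k -> p %| zabs k -> 0 < staircase (fun j => logn p `|y j|) ybound k.
  by move=> k_gt0 pk; rewrite -logn_zabs // logn_gt0_dvd ?zabs_gt0.
have ph : p %| zabs h := dvdn_trans p_dvd (dvdn_gcdl _ _).
have pl : p %| zabs l := dvdn_trans p_dvd (dvdn_gcdr _ _).
have := staircase_chain hN lN (stair_gt0 h h_gt0 ph) (stair_gt0 l l_gt0 pl).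
by rewrite (negbTE nhl) (negbTE nlh).
Qed.

Lemma zsign_exp2 (j : 'I_n) : zsign (2 ^ j) = sgz (y j).
Proof.
rewrite /zsign bitsum_exp2 eqxx (bigD1 j) //= eps_exp2 eqxx expr1 big1 ?mulr1 //.
by move=> k /negbTE kj; rewrite eps_exp2 kj expr0.
Qed.

Lemma zmono_zsign (j : 'I_n) : zmono n zsign (eps j) = sgz (y j).
Proof.
rewrite zmono_bits_split zsign_exp2 -[RHS]mulr1; congr (_ * _)%R.
rewrite -(zmono1 n (fun h => (eps j h * (h != 2 ^ j))%N)).
apply: eq_zmono => h hN; split=> //; rewrite muln_gt0 lt0b => /andP[ejh hj].
by rewrite /zsign gtn_eqF // (eps_bitsum_gt1 hN hj); have := eps_le1 j h; lia.
Qed.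

Lemma zmono_zabs (j : 'I_n) : zmono n (fun h => Posz (zabs h)) (eps j) = Posz `|y j|.
Proof.
have -> : zmono n (fun h => Posz (zabs h)) (eps j) = Posz (\prod_(1 <= h < N.+1) zabs h ^ eps j h).
  rewrite (big_morph Posz PoszM (erefl : Posz 1 = 1%R)); apply: eq_bigr => h _.
  by rewrite -!natz natrX.
have prod_gt0 : 0 < \prod_(1 <= h < N.+1) zabs h ^ eps j h.
  by apply: prodn_gt0 => h; rewrite expn_gt0 zabs_gt0.
congr Posz; apply: eqn_from_log; rewrite ?absz_gt0 // => q.
have [qp|nq] := boolP (prime q); last by rewrite !logn_eq0_prime.
rewrite logn_prod => [|h _]; last by rewrite expn_gt0 zabs_gt0.
rewrite -[RHS](bitweight_staircase (a := fun j => logn q `|y j|) (logn_y_le_ybound q j)).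
rewrite /bitweight big_nat_cond [RHS]big_nat_cond; apply: eq_bigr => h /andP[/andP[h_gt0 _] _].
by rewrite lognX logn_zabs.
Qed.

Lemma ycoord_zconstr (j : 'I_n) : zmono n (zh zconstr) (eps j) = y j.
Proof.
rewrite (@eq_zmono n _ (fun h => zsign h * Posz (zabs h))%R _ (eps j)) => [|h hN].
  by rewrite zmonoMl zmono_zsign zmono_zabs -intEsg.
by rewrite zh_zconstr.
Qed.

Lemma logn_zconstr_exp2 p (i m : 'I_n) : prime p -> 0 < logn p `|zh zconstr (2 ^ i)| ->
  m != i -> logn p `|zh zconstr (2 ^ i)| + logn p `|y m| <= logn p `|y i|.
Proof.
have [i_gt0 iN] := andP (exp2_range i).
rewrite abs_zconstr ?exp2_range // => pp; rewrite logn_zabs // => stair_gt0 mi.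
by apply: staircase_exp2 mi stair_gt0 => j; apply: logn_y_le_ybound.
Qed.

End Construction.

Section Proposition.
Variable n : nat.
Local Notation N := (Nn n).
Implicit Types (a : {ffun 'I_n -> int} * {ffun 'I_N -> int})
               (b : {ffun 'I_n -> int} * {ffun 'I_n -> int}).

Lemma A0_Bset a : 0 < n -> A0 a -> Bset (phi a).
Proof.
case: a => x' z n_gt0 [zeq zgcd S R]; split.
- by apply/prodf_neq0 => j _; rewrite phi2E (zmono_neq0 _ (sign_nonzero S)).
- by rewrite phi_cofactor_sum zeq mulr0.
- exact: (A0_gcd_phi x' n_gt0 S R).1 zgcd.
Qed.

Lemma phi_inj a1 a2 : A0 a1 -> A0 a2 -> phi a1 = phi a2 -> a1 = a2.
Proof.
case: a1 a2 => [x1 z1] [x2 z2] [_ _ S1 R1] [_ _ S2 R2] phi12.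
have z12 : z1 = z2.
  by apply: ycoord_inj => // j; rewrite -(phi2E x1) -(phi2E x2) phi12.
subst z2; congr (_, _); apply/ffunP => i; apply: (mulfI (sign_nonzero S1 (exp2_range i))).
by rewrite -!phi1E phi12.
Qed.

Lemma phi_surj b : 0 < n -> Bset b -> exists2 a, A0 a & phi a = b.
Proof.
case: b => x y n_gt0 [/prodf_neq0 y_neq0 xy_eq xy_gcd].
have {}y_neq0 j : y j != 0%R by exact: y_neq0.
pose z := zconstr y; have S := sign_zconstr y_neq0; have R := reduced_zconstr y_neq0.
have z_dvd i : (zh z (2 ^ i) %| x i)%Z.
  apply: dvdz_cofactor_sum_eq0 xy_eq _ _ => //; first exact: sign_nonzero S _ (exp2_range i).
  by move=> p pp i_gt0 m mi; exact: (logn_zconstr_exp2 y_neq0 pp i_gt0 mi).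
pose x' := [ffun i => (x i %/ zh z (2 ^ i))%Z].
have phi_x'z : phi (x', z) = (x, y).
  congr (_, _); apply/ffunP => i; first by rewrite phi1E ffunE mulrC divzK.
  by rewrite phi2E ycoord_zconstr.
exists (x', z) => //; split=> //; last by apply/(A0_gcd_phi x' n_gt0 S R); rewrite phi_x'z.
have := phi_cofactor_sum x' z; rewrite phi_x'z xy_eq => /esym/eqP.
by rewrite mulf_eq0 (negbTE (zmono_neq0 _ (sign_nonzero S))) => /eqP.
Qed.

End Proposition.

Unset Implicit Arguments.
Local Open Scope ring_scope.

Theorem proposition5 (n : nat) : (3 <= n)%N ->
  [/\ (forall a, @A0 n a -> Bset (phi a)),
      (forall a1 a2, @A0 n a1 -> A0 a2 -> phi a1 = phi a2 -> a1 = a2),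
      (forall b, @Bset n b -> exists2 a, A0 a & phi a = b)
    & (forall a : {ffun 'I_n -> int} * {ffun 'I_(Nn n) -> int},
         A0_eq a.1 a.2 -> A0_sign a.2 -> reduced a.2 ->
         (A0_gcd a.1 a.2 <-> B_gcd (phi a)))].
Proof.
move=> n_ge3; have n_gt0 : (0 < n)%N by apply: leq_trans n_ge3.
split=> [a|a1 a2|b|[x' z] _ S R].
- exact: A0_Bset.
- exact: phi_inj.
- exact: phi_surj.
- exact: A0_gcd_phi.
Qed.
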